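(* Let $d\ge 1$, $r\in(0,+\infty)$, let $\|\cdot\|$ be a norm on $\mathbb{R}^d$ and let $P$ be a Borel probability measure on $\mathbb{R}^d$ with $\int\|x\|^r\,dP(x)<+\infty$. Let $(a_n)_{n\ge1}$ be an $L^r$-optimal greedy quantization sequence for $P$ and $a^{(n)}=\{a_1,\dots,a_n\}$. Then, for every probability distribution $\nu$ on $(\mathbb{R}^d,\mathcal{B}(\mathbb{R}^d))$, every $c\in(0,\tfrac12)$ and every $n\ge1$, $$e_r(a^{(n)},P)^r-e_r(a^{(n+1)},P)^r\ \ge\ \frac{(1-c)^r-c^r}{(c+1)^r}\int \nu\Big(B\Big(x,\tfrac{c}{c+1}\,d(x,a^{(n)})\Big)\Big)\,d(x,a^{(n)})^r\,dP(x).$$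
   Context: For a finite nonempty set $\Gamma\subset\mathbb{R}^d$ and $x\in\mathbb{R}^d$, $d(x,\Gamma)=\min_{a\in\Gamma}\|x-a\|$ and $e_r(\Gamma,P)=\big(\int d(x,\Gamma)^r\,dP(x)\big)^{1/r}$. An $L^r$-optimal greedy quantization sequence for $P$ is a sequence $(a_n)_{n\ge1}$ in $\mathbb{R}^d$ such that, with $a^{(0)}=\varnothing$ and $a^{(n)}=\{a_1,\dots,a_n\}$, for every $n\ge0$, $a_{n+1}\in\operatorname{argmin}_{\xi\in\mathbb{R}^d} e_r(a^{(n)}\cup\{\xi\},P)$ (so $a_1$ is an $L^r$-median of $P$, i.e. a minimizer of $\xi\mapsto e_r(\{\xi\},P)$). $B(x,t)=\{y\in\mathbb{R}^d:\|y-x\|\le t\}$. *)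

From HB Require Import structures.
From mathcomp Require Import all_boot all_order all_algebra.
From mathcomp Require Import all_classical all_reals all_analysis.
Set Implicit Arguments. Unset Strict Implicit. Unset Printing Implicit Defensive.
Import Order.TTheory GRing.Theory Num.Theory.
Import numFieldNormedType.Exports.
Local Open Scope classical_set_scope.
Local Open Scope ring_scope.

(* R^d is (matrix R 1 d); its Borel sigma-algebra is the sigma-algebra generated by
   the open sets of the standard (product) topology on (matrix R 1 d). *)
Definition borel_sets (R : realType) (d : nat) : set (set (matrix R 1 d)) := open.
Definition Rd (R : realType) (d : nat) := g_sigma_algebraType (@borel_sets R d).

Definition is_norm (R : realType) (d : nat) (N : (matrix R 1 d) -> R) : Prop :=
  [/\ forall x, N x = 0 -> x = 0,
      forall (a : R) x, N (a *: x) = `|a| * N x &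
      forall x y, N (x + y) <= N x + N y].

Definition Nball (R : realType) (d : nat) (N : (matrix R 1 d) -> R) (x : (matrix R 1 d)) (t : R)
  : set (matrix R 1 d) := [set y | N (y - x) <= t].

(* d(x, Gamma) for a finite set Gamma given by a list (min over the list;
   +oo for the empty list, which never occurs below). *)
Definition distG (R : realType) (d : nat) (N : (matrix R 1 d) -> R)
  (G : seq (matrix R 1 d)) (x : (matrix R 1 d)) : \bar R :=
  \big[mine/+oo%E]_(g <- G) (N (x - g))%:E.

Definition err (R : realType) (d : nat) (N : (matrix R 1 d) -> R) (r : R)
  (P : probability (Rd R d) R) (G : seq (matrix R 1 d)) : \bar R :=
  ((\int[P]_x (distG N G x `^ r)%E) `^ r^-1)%E.

(* a^(n) = {a_1,...,a_n}; the Rocq sequence is 0-indexed: a 0 = a_1, ... *)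
Definition pts (R : realType) (d : nat) (a : nat -> (matrix R 1 d)) (n : nat)
  : seq (matrix R 1 d) := [seq a k | k <- iota 0 n].

Definition greedy_seq (R : realType) (d : nat) (N : (matrix R 1 d) -> R) (r : R)
  (P : probability (Rd R d) R) (a : nat -> (matrix R 1 d)) : Prop :=
  forall (n : nat) (xi : (matrix R 1 d)),
    (err N r P (rcons (pts a n) (a n)) <= err N r P (rcons (pts a n) xi))%E.

From HB Require Import structures.
From mathcomp Require Import all_boot all_order all_algebra.
From mathcomp Require Import all_classical all_reals all_analysis.
From mathcomp Require Import measurable_realfun lra.
Set Implicit Arguments. Unset Strict Implicit. Unset Printing Implicit Defensive.
Import Order.TTheory GRing.Theory Num.Theory.
Import numFieldNormedType.Exports.
Local Open Scope classical_set_scope.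
Local Open Scope ring_scope.

(* Write D(x) = d(x, a^(n)) and t = c / (c + 1). Adding a point xi to a^(n)
   never increases d(x, .)^r, and decreases it by at least (1 - t^r) D(x)^r
   wherever ||xi - x|| <= t D(x). Integrating this pointwise gain against
   P(dx) nu(dxi) and exchanging the integrals (Tonelli), the nu-average of the
   gains e_r(a^(n))^r - e_r(a^(n) U {xi})^r is at least
   (1 - t^r) \int nu(B(x, t D(x))) D(x)^r dP(x); the greedy point a_(n+1)
   realizes the largest gain, and ((1 - c)^r - c^r) / (c + 1)^r <= 1 - t^r. *)

Lemma countable_bigcup_measurable dT (T : measurableType dT) (I : countType)
    (P : set I) (F : I -> set T) :
  (forall i, P i -> measurable (F i)) -> measurable (\bigcup_(i in P) F i).
Proof.
move=> mF; rewrite bigcup_mkcond.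
apply: countable_bigcupT_measurable; first exact: countableP.
by move=> i; case: ifPn => // /set_mem /mF.
Qed.

Section Rd_measurability.
Variables (R : realType) (d : nat).
Local Notation V := (matrix R 1 d).
Local Notation T := (Rd R d).

Lemma open_bigcup_rat_ball (U : set V) : open U ->
  U = \bigcup_(p in [set p : 'M[rat]_(1, d) * rat |
                       ball (map_mx ratr p.1 : V) (ratr p.2) `<=` U])
        ball (map_mx ratr p.1 : V) (ratr p.2).
Proof.
move=> oU; apply/seteqP; split => [x Ux|x [p /= sU /sU] //].
have /nbhs_ballP [e e0 sU] : nbhs x U by apply: open_nbhs_nbhs.
have [q] : exists q : rat, ratr q \in `]0, e / 2[ by apply: rat_in_itvoo; rewrite divr_gt0.
rewrite in_itv /= => /andP[q0 qe].
have /boolp.choice [Q xQ] : forall ij : 'I_1 * 'I_d,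
    exists s : rat, ball (x ij.1 ij.2) (ratr q) (ratr s).
  move=> ij; have [s] : exists s : rat,
      ratr s \in `]x ij.1 ij.2 - ratr q, x ij.1 ij.2 + ratr q[.
    by apply: rat_in_itvoo; rewrite ltrBlDr -addrA ltrDl addr_gt0.
  by rewrite in_itv /= => hs; exists s; rewrite /ball /= ltr_distlC.
have xQ' : ball (map_mx ratr (\matrix_(i, j) Q (i, j)) : V) (ratr q) x.
  by split => // i j; apply: ball_sym; rewrite !mxE; exact: xQ (i, j).
exists (\matrix_(i, j) Q (i, j), q) => //= y Qy; apply: sU.
apply: (@le_ball _ _ _ (ratr q + ratr q)); first by rewrite [leRHS](splitr e) lerD // ltW.
exact: ball_triangle (ball_sym xQ') Qy.
Qed.

(* [Rd R d * Rd R d] carries the product of the Borel sigma-algebras, not the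
   Borel sigma-algebra of the product topology; since R^d is second countable,
   measurability into [Rd R d] can be checked coordinatewise. *)
Lemma Rd_measurable_fun_coord dX (X : measurableType dX) (f : X -> T) :
  (forall i j, measurable_fun [set: X] (fun x => (f x : V) i j)) ->
  measurable_fun [set: X] f.
Proof.
move=> mf; apply: (@measurability _ _ _ T _ f (@borel_sets R d) erefl).
move=> _ [U oU <-]; rewrite setTI (open_bigcup_rat_ball oU) preimage_bigcup.
apply: countable_bigcup_measurable => -[Q e] _ /=.
have [e0|e0] := ltP 0 (ratr e : R); last first.
  rewrite (_ : ball _ _ = set0) ?preimage_set0 //.
  by apply/seteqP; split => // y [/lt_le_trans /(_ e0)]; rewrite ltxx.
rewrite (_ : _ @^-1` _ = \bigcap_(ij in [set: 'I_1 * 'I_d])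
    (fun x => (f x : V) ij.1 ij.2) @^-1` ball ((map_mx ratr Q : V) ij.1 ij.2) (ratr e)).
  apply: fin_bigcap_measurable; first exact: finite_finset.
  move=> [i j] _; rewrite -[X in measurable X]setTI.
  by apply: mf => //; apply: open_measurable; exact: ball_open.
apply/seteqP; split => x /= => [[_ bx] [i j] _|bx]; first exact: bx.
by split => // i j; exact: bx (i, j) Logic.I.
Qed.

Lemma Rd_continuous_measurable_fun (f : V -> R) :
  continuous f -> measurable_fun [set: T] f.
Proof.
move=> /continuousP cf.
apply: (measurability _ (RGenOpens.measurableE R)).
move=> _ [_ [a [b ->]] <-].
by apply: sub_sigma_algebra; rewrite setTI; apply: cf; exact: interval_open.
Qed.

Lemma measurable_subr_pair :
  measurable_fun [set: T * T] (fun z : T * T => ((z.1 : V) - (z.2 : V) : T)).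
Proof.
apply: Rd_measurable_fun_coord => i j.
have mij : measurable_fun [set: T] (fun x : T => (x : V) i j).
  by apply: Rd_continuous_measurable_fun; exact: coord_continuous.
rewrite (_ : (fun z => _) = fun z : T * T => (z.1 : V) i j - (z.2 : V) i j).
  by apply: measurable_funB; exact: measurableT_comp mij _.
by apply/funext => z; rewrite !mxE.
Qed.

End Rd_measurability.

Section abstract_norm.
Variables (R : realType) (d : nat) (N : matrix R 1 d -> R).
Hypothesis hN : is_norm N.
Local Notation V := (matrix R 1 d).
Local Notation T := (Rd R d).

Lemma isnormZ a x : N (a *: x) = `|a| * N x.
Proof. by case: hN. Qed.

Lemma isnorm_lerD x y : N (x + y) <= N x + N y.
Proof. by case: hN. Qed.

Lemma isnorm0 : N 0 = 0.
Proof. by rewrite -(scale0r (0 : V)) isnormZ normr0 mul0r. Qed.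

Lemma isnormN x : N (- x) = N x.
Proof. by rewrite -scaleN1r isnormZ normrN normr1 mul1r. Qed.

Lemma isnorm_ge0 x : 0 <= N x.
Proof. by have := isnorm_lerD x (- x); rewrite subrr isnorm0 isnormN; lra. Qed.

Lemma isnorm_distC x y : N (x - y) = N (y - x).
Proof. by rewrite -isnormN opprB. Qed.

Lemma isnorm_ler_dist_dist x y : `|N x - N y| <= N (x - y).
Proof.
have := isnorm_lerD (x - y) y; have := isnorm_lerD (y - x) x.
by rewrite !subrK isnorm_distC ler_norml; lra.
Qed.

Lemma isnorm_le_sum_coord (v : V) :
  N v <= \sum_(j < d) `|v ord0 j| * N (delta_mx ord0 j).
Proof.
rewrite {1}(matrix_sum_delta v) big_ord1.
elim/big_ind2 : _ => [|x1 x2 y1 y2 ? ?|j _]; first by rewrite isnorm0.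
- by apply: le_trans (isnorm_lerD _ _) _; exact: lerD.
- by rewrite isnormZ.
Qed.

Lemma isnorm_lipschitz_continuous (f : V -> R) :
  (forall x y, `|f x - f y| <= N (x - y)) -> continuous f.
Proof.
move=> Lf x A /nbhs_ballP [e /= e0 sA].
set C := \sum_(j < d) N (delta_mx ord0 j).
have C0 : 0 <= C by apply: sumr_ge0 => j _; exact: isnorm_ge0.
apply/nbhs_ballP; exists (e / (C + 1)); first by rewrite /= divr_gt0 // ltr_wpDl.
move=> y [_ bxy]; apply: sA; rewrite /ball /=.
apply: le_lt_trans (Lf x y) _; apply: le_lt_trans (isnorm_le_sum_coord _) _.
apply: (@le_lt_trans _ _ (\sum_(j < d) e / (C + 1) * N (delta_mx ord0 j))).
  apply: ler_sum => j _; apply: ler_wpM2r; first exact: isnorm_ge0.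
  by rewrite !mxE; apply: ltW; exact: bxy.
by rewrite -mulr_sumr -/C mulrAC ltr_pdivrMr ?ltr_wpDl // mulrDr mulr1 ltrDl.
Qed.

Lemma measurable_isnorm : measurable_fun [set: T] (N : T -> R).
Proof.
apply: Rd_continuous_measurable_fun.
exact: isnorm_lipschitz_continuous isnorm_ler_dist_dist.
Qed.

Lemma measurable_isnorm_shift (g : V) :
  measurable_fun [set: T] (fun x : T => N ((x : V) - g)).
Proof.
apply: Rd_continuous_measurable_fun; apply: isnorm_lipschitz_continuous => x y.
by rewrite (_ : x - y = (x - g) - (y - g)) ?isnorm_ler_dist_dist // opprB addrA subrK.
Qed.

Lemma measurable_Nball (x : V) s : measurable (Nball N x s : set T).
Proof.
have := measurable_isnorm_shift x measurableT (measurable_itv `]-oo, s]).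
by rewrite setTI (_ : _ @^-1` _ = Nball N x s) //; apply/seteqP; split => y; rewrite /= in_itv.
Qed.

Lemma measurable_isnorm_subr_pair :
  measurable_fun [set: T * T] (fun z : T * T => N ((z.1 : V) - (z.2 : V))).
Proof.
exact: (measurableT_comp measurable_isnorm (measurable_subr_pair (R:=R) (d:=d))).
Qed.

End abstract_norm.

Lemma powRD_le (R : realType) (r u v : R) : 0 <= r -> 0 <= u -> 0 <= v ->
  (u + v) `^ r <= 2 `^ r * (u `^ r + v `^ r).
Proof.
move=> r0; wlog vu : u v / v <= u => [hwlog u0 v0|u0 v0].
  by have [/hwlog|/ltW/hwlog] := leP v u; rewrite 1?[v + u]addrC 1?[v `^ r + _]addrC; apply.
apply: (@le_trans _ _ ((2 * u) `^ r)).
  by apply: ge0_ler_powR; rewrite ?nnegrE //; lra.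
by rewrite powRM // ler_wpM2l ?powR_ge0 // lerDl powR_ge0.
Qed.

Section distance_to_finite_set.
Variables (R : realType) (d : nat) (N : matrix R 1 d -> R).
Hypothesis hN : is_norm N.
Local Notation T := (Rd R d).

Lemma distG_cons g G x : distG N (g :: G) x = mine (N (x - g))%:E (distG N G x).
Proof. by rewrite /distG big_cons. Qed.

Lemma distG_rcons G xi x :
  distG N (rcons G xi) x = mine (distG N G x) (N (x - xi))%:E.
Proof.
elim: G => [|g G IH]; first by rewrite /= distG_cons /distG !big_nil miney minye.
by rewrite rcons_cons !distG_cons IH minA.
Qed.

Lemma distG_ge0 G x : (0 <= distG N G x)%E.
Proof.
elim: G => [|g G IH]; first by rewrite /distG big_nil.
by rewrite distG_cons le_min lee_fin isnorm_ge0.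
Qed.

Lemma distG_le_mem g G x : g \in G -> (distG N G x <= (N (x - g))%:E)%E.
Proof.
elim: G => [//|h G IH]; rewrite distG_cons in_cons ge_min.
by case/orP => [/eqP ->|/IH ->]; rewrite ?lexx ?orbT.
Qed.

Lemma fin_num_distG G x : G != [::] -> distG N G x \is a fin_num.
Proof.
case: G => [//|g G] _; elim: G g => [|h G IH] g; rewrite distG_cons.
  by rewrite /distG big_nil miney.
by rewrite -(fineK (IH h)) -EFin_min.
Qed.

Lemma measurable_distG G : measurable_fun [set: T] (distG N G).
Proof.
elim: G => [|g G IH].
  by rewrite (_ : distG N [::] = cst +oo%E) //; apply/funext => x; rewrite /distG big_nil.
rewrite (_ : distG N _ = fun x => mine (N (x - g))%:E (distG N G x)).
  by apply: measurable_mine => //; apply/measurable_EFinP; exact: measurable_isnorm_shift.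
by apply/funext => x; rewrite distG_cons.
Qed.

Lemma err_poweR (r : R) (P : probability T R) G : 0 < r ->
  (err N r P G `^ r = \int[P]_x (distG N G x `^ r))%E.
Proof.
move=> r0; rewrite /err -poweRrM mulVf ?gt_eqF // poweRe1 //.
by apply: integral_ge0 => x _; exact: poweR_ge0.
Qed.

End distance_to_finite_set.

Section optimal_point_gain.
Variables (R : realType) (d : nat) (N : matrix R 1 d -> R) (r : R).
Local Notation V := (matrix R 1 d).
Local Notation T := (Rd R d).
Variable P : probability T R.
Hypotheses (hN : is_norm N) (r0 : 0 < r).
Hypothesis NrP : (\int[P]_x ((N x)%:E `^ r) < +oo)%E.
Variable G : seq V.
Hypothesis G0 : G != [::].

Let dist x := fine (distG N G x).

Let distE x : distG N G x = (dist x)%:E.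
Proof. by rewrite fineK // fin_num_distG. Qed.

Let dist_ge0 x : 0 <= dist x.
Proof. by rewrite -lee_fin -distE distG_ge0. Qed.

Let measurable_dist : measurable_fun [set: T] dist.
Proof.
apply/measurable_EFinP; rewrite (_ : EFin \o dist = distG N G).
  exact: measurable_distG.
by apply/funext => x; rewrite /= distE.
Qed.

Let measurable_dist_powR : measurable_fun [set: T] (fun x => (dist x `^ r)%:E).
Proof.
by apply/measurable_EFinP; exact: measurableT_comp (@measurable_powR R r) measurable_dist.
Qed.

Let integrable_dist_powR : P.-integrable [set: T] (EFin \o (fun x => dist x `^ r)).
Proof.
have [g gG] : exists g, g \in G by case: G G0 => // g G' _; exists g; exact: mem_head.
have iNr : P.-integrable [set: T] (fun x => (N x `^ r)%:E).
  apply/integrableP; split.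
    apply/measurable_EFinP.
    exact: measurableT_comp (@measurable_powR R r) (measurable_isnorm hN).
  under eq_integral do rewrite gee0_abs ?lee_fin ?powR_ge0 // -poweR_EFin.
  exact: NrP.
have := integrableZl measurableT (2 `^ r) (integrableD measurableT iNr
  (finite_measure_integrable_cst P (N g `^ r) measurableT)).
apply: le_integrable => //.
move=> x _ /=; rewrite lee_fin !ger0_norm ?powR_ge0 ?mulr_ge0 ?addr_ge0 ?powR_ge0 //.
apply: le_trans _ (powRD_le (ltW r0) (isnorm_ge0 hN x) (isnorm_ge0 hN g)).
apply: (@ge0_ler_powR R r (ltW r0)); rewrite ?nnegrE ?addr_ge0 ?(isnorm_ge0 hN) //.
rewrite -[N g](isnormN hN); apply: le_trans _ (isnorm_lerD hN x (- g)).
by rewrite -lee_fin -distE distG_le_mem.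
Qed.

Let dist_rcons_powR xi x := Num.min (dist x) (N (x - xi)) `^ r.

Let dist_rcons_powR_le xi x : dist_rcons_powR xi x <= dist x `^ r.
Proof.
apply: (@ge0_ler_powR R r (ltW r0)); rewrite ?nnegrE ?le_min ?dist_ge0 ?(isnorm_ge0 hN) //.
by rewrite ge_min lexx.
Qed.

Let integrable_dist_rcons_powR xi :
  P.-integrable [set: T] (EFin \o dist_rcons_powR xi).
Proof.
apply: le_integrable integrable_dist_powR => //.
  apply/measurable_EFinP; apply: measurableT_comp (@measurable_powR R r) _.
  exact: measurable_minr (measurable_isnorm_shift hN xi).
by move=> x _ /=; rewrite lee_fin !ger0_norm ?powR_ge0.
Qed.

Let err_poweRE : (err N r P G `^ r = \int[P]_x (dist x `^ r)%:E)%E.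
Proof. by rewrite err_poweR //; apply: eq_integral => x _; rewrite distE poweR_EFin. Qed.

Let err_poweR_rconsE xi :
  (err N r P (rcons G xi) `^ r = \int[P]_x (dist_rcons_powR xi x)%:E)%E.
Proof.
rewrite err_poweR //; apply: eq_integral => x _.
by rewrite distG_rcons distE -EFin_min poweR_EFin.
Qed.

Let gain (z : T * T) : \bar R := (dist z.1 `^ r - dist_rcons_powR z.2 z.1)%:E.

Let gain_ge0 z : (0 <= gain z)%E.
Proof. by rewrite lee_fin subr_ge0. Qed.

Let measurable_gain : measurable_fun [set: T * T] gain.
Proof.
have mdist1 : measurable_fun [set: T * T] (fun z : T * T => dist z.1).
  exact: measurableT_comp measurable_dist measurable_fst.
apply/measurable_EFinP; apply: measurable_funB.
  exact: measurableT_comp (@measurable_powR R r) mdist1.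
apply: measurableT_comp (@measurable_powR R r) _.
exact: measurable_minr mdist1 (measurable_isnorm_subr_pair hN).
Qed.

Let integral_gain xi : (\int[P]_x gain (x, xi) =
  err N r P G `^ r - err N r P (rcons G xi) `^ r)%E.
Proof. by rewrite err_poweRE err_poweR_rconsE -integralB_EFin. Qed.

Let gain_ball t x xi : 0 <= t -> N (xi - x) <= t * dist x ->
  (((1 - t `^ r) * dist x `^ r)%:E <= gain (x, xi))%E.
Proof.
move=> t0 xi_near; rewrite lee_fin mulrBl mul1r lerB // -powRM //.
apply: (@ge0_ler_powR R r (ltW r0));
  rewrite ?nnegrE ?le_min ?dist_ge0 ?(isnorm_ge0 hN) ?mulr_ge0 //.
by rewrite ge_min (isnorm_distC hN) xi_near orbT.
Qed.

Let measurable_measure_ball (nu : probability T R) t :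
  measurable_fun [set: T] (fun x => nu (Nball N x (t * dist x))).
Proof.
pose A := [set z : T * T | N ((z.2 : V) - z.1) <= t * dist z.1].
have mA : measurable A.
  have : measurable_fun [set: T * T] (fun z : T * T => N ((z.1 : V) - z.2) - t * dist z.1).
    apply: measurable_funB; first exact: measurable_isnorm_subr_pair.
    exact: measurable_funM (measurableT_comp measurable_dist measurable_fst).
  move=> /(_ measurableT _ (measurable_itv `]-oo, 0])).
  rewrite setTI (_ : _ @^-1` _ = A) //; apply/seteqP; split => z;
    by rewrite /= in_itv /= subr_le0 (isnorm_distC hN).
rewrite (_ : (fun x => _) = nu \o xsection A); first exact: measurable_fun_xsection.
by apply/funext => x; congr (nu _); apply/seteqP; split => y; rewrite /xsection /= inE.
Qed.

Let one_minus_powR_ge0 t : 0 <= t <= 1 -> 0 <= 1 - t `^ r.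
Proof.
move=> /andP[t0 t1].
have : t `^ r <= 1 `^ r by apply: (@ge0_ler_powR R r (ltW r0)); rewrite ?nnegrE.
by rewrite powR1 subr_ge0.
Qed.

Let integral_gain_ball_ge (nu : probability T R) t x : 0 <= t <= 1 ->
  ((1 - t `^ r)%:E * (nu (Nball N x (t * dist x)) * (dist x `^ r)%:E)
   <= \int[nu]_xi gain (x, xi))%E.
Proof.
move=> t01; have K0 := one_minus_powR_ge0 t01; have /andP[t0 _] := t01.
have mB := measurable_Nball hN x (t * dist x).
have mgx : measurable_fun [set: T] (fun xi => gain (x, xi)).
  exact: measurable_fun_pair2 measurable_gain.
apply: (@le_trans _ _ (\int[nu]_(xi in Nball N x (t * dist x))
                         ((1 - t `^ r) * dist x `^ r)%:E)%E).
  by rewrite integral_cst // EFinM muleCA muleC -muleA.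
apply: (@le_trans _ _ (\int[nu]_(xi in Nball N x (t * dist x)) gain (x, xi))%E).
  apply: ge0_le_integral => //.
  - by move=> xi _; rewrite lee_fin mulr_ge0 ?powR_ge0.
  - exact: measurable_funS mgx.
  - by move=> xi; rewrite /Nball /=; exact: gain_ball.
exact: ge0_subset_integral.
Qed.

Let integral_gain_le_optimal (nu : probability T R) b :
  (forall xi, err N r P (rcons G b) <= err N r P (rcons G xi))%E ->
  (\int[nu]_xi \int[P]_x gain (x, xi)
   <= err N r P G `^ r - err N r P (rcons G b) `^ r)%E.
Proof.
move=> b_opt; apply: (@le_trans _ _ (\int[nu]_xi
   (err N r P G `^ r - err N r P (rcons G b) `^ r))%E); last first.
  by rewrite integral_cst // -[X in (_ * X)%E]/(nu [set: T]) probability_setT mule1.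
apply: ge0_le_integral => //.
- by move=> xi _; apply: integral_ge0 => x _; exact: gain_ge0.
- exact: (measurable_fun_fubini_tonelli_G (m1 := P) gain measurable_gain gain_ge0).
move=> xi _; rewrite integral_gain; apply: leeB => //.
by apply: (gt0_ler_poweR (ltW r0)) (b_opt xi); rewrite in_itv /= ?poweR_ge0 ?leey.
Qed.

Lemma err_rcons_optimal_gain (b : V) :
  (forall xi, err N r P (rcons G b) <= err N r P (rcons G xi))%E ->
  forall (nu : probability T R) (t : R), 0 <= t <= 1 ->
  ((1 - t `^ r)%:E *
     \int[P]_x (nu (Nball N x (t * fine (distG N G x))) * distG N G x `^ r)
   <= err N r P G `^ r - err N r P (rcons G b) `^ r)%E.
Proof.
move=> b_opt nu t t01.
have -> : (fun x => nu (Nball N x (t * fine (distG N G x))) * distG N G x `^ r)%E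
    = (fun x => nu (Nball N x (t * dist x)) * (dist x `^ r)%:E)%E.
  by apply/funext => x; rewrite distE poweR_EFin.
have K0 := one_minus_powR_ge0 t01.
have mh := emeasurable_funM (measurable_measure_ball nu t) measurable_dist_powR.
rewrite -ge0_integralZl //; last by move=> x _; rewrite mule_ge0 ?lee_fin ?powR_ge0.
apply: le_trans (integral_gain_le_optimal nu b_opt).
rewrite -(fubini_tonelli gain measurable_gain gain_ge0).
apply: ge0_le_integral => [//|x _||| x _].
- by rewrite !mule_ge0 ?lee_fin ?powR_ge0.
- exact: emeasurable_funM.
- exact: (measurable_fun_fubini_tonelli_F (m2 := nu) gain measurable_gain gain_ge0).
- exact: integral_gain_ball_ge.
Qed.

End optimal_point_gain.

Lemma pts_rcons (R : realType) (d : nat) (a : nat -> matrix R 1 d) n :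
  pts a n.+1 = rcons (pts a n) (a n).
Proof. by rewrite /pts -[n.+1]addn1 iotaD map_cat cats1. Qed.

(* The argument yields the constant 1 - (c / (c + 1))^r, which dominates the
   one in the statement. *)
Lemma greedy_constant_le (R : realType) (c r : R) : 0 <= c <= 1 -> 0 <= r ->
  ((1 - c) `^ r - c `^ r) / (c + 1) `^ r <= 1 - (c / (c + 1)) `^ r.
Proof.
move=> /andP[c0 c1] r0; have c10 : 0 < c + 1 by lra.
rewrite ler_pdivrMr ?powR_gt0 // mulrBl mul1r.
rewrite -powRM ?divfK ?gt_eqF ?divr_ge0 ?(ltW c10) //.
by rewrite lerB // ge0_ler_powR ?nnegrE //; lra.
Qed.

Theorem proposition2p1 (R : realType) (d : nat) (r : R)
  (N : (matrix R 1 d) -> R) (P : probability (Rd R d) R) (a : nat -> (matrix R 1 d)) :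
  (1 <= d)%N -> 0 < r -> is_norm N ->
  (\int[P]_x ((N x)%:E `^ r) < +oo)%E ->
  greedy_seq N r P a ->
  forall (nu : probability (Rd R d) R) (c : R), 0 < c < 2^-1 ->
  forall n : nat, (1 <= n)%N ->
  (err N r P (pts a n) `^ r - err N r P (pts a n.+1) `^ r >=
     ((powR (1 - c) r - powR c r) / powR (c + 1) r)%:E *
     \int[P]_x (nu (Nball N x (c / (c + 1) * fine (distG N (pts a n) x)))
                * distG N (pts a n) x `^ r))%E.
Proof.
move=> _ r0 hN NrP greedy nu c /andP[c0 c2] [//|m] _.
have t01 : 0 <= c / (c + 1) <= 1.
  by rewrite divr_ge0 ?ler_pdivrMr ?mul1r; lra.
rewrite [pts a m.+2]pts_rcons.
apply: le_trans _ (err_rcons_optimal_gain hN r0 NrP _ (greedy m.+1) nu t01) => //.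
apply: lee_wpmul2r.
  by apply: integral_ge0 => x _; rewrite mule_ge0 ?poweR_ge0.
by rewrite lee_fin greedy_constant_le ?(ltW r0) //; lra.
Qed.
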